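(* Let $\Omega=\{1,\dots,m\}^{\mathbb{N}}$ with shift $\sigma$, let $\mathcal{M}$ be the set of Borel probabilities on $\Omega$ with the Monge–Kantorovich metric $d_{MK}$, and let $\mathfrak{T}:\mathcal{M}\to\mathcal{M}$ be the push-forward map $\mathfrak{T}(\mu)(E)=\mu(\sigma^{-1}(E))$. Then the set of periodic points of $\mathfrak{T}$ (those $\mu\in\mathcal{M}$ with $\mathfrak{T}^r(\mu)=\mu$ for some $r\ge1$) is dense in $\mathcal{M}$.
   Context: $\Omega$ carries the metric $d_\Omega(\alpha,\beta)=2^{-k}$ with $k=\min\{i:\alpha_i\neq\beta_i\}$ (and $0$ if $\alpha=\beta$); $d_{MK}(\mu,\nu)=\sup\{\int f\,d\mu-\int f\,d\nu : f \text{ 1-Lipschitz}\}$. $\sigma(x_1,x_2,\dots)=(x_2,x_3,\dots)$. *)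

From HB Require Import structures.
From mathcomp Require Import all_boot all_order all_algebra.
From mathcomp Require Import all_classical all_reals all_analysis.
Set Implicit Arguments. Unset Strict Implicit. Unset Printing Implicit Defensive.
Import Order.TTheory GRing.Theory Num.Theory.
Local Open Scope classical_set_scope.
Local Open Scope ring_scope.

(* Sequence space over the alphabet {1,...,m}, represented by 'I_m
   (written 'I_(m.-1).+1, which has exactly m elements when 0 < m; this
   form gives the carrier a canonical point).  The coordinate x_{i+1} of
   the paper is (x i) here (0-based indexing). *)
Definition Omega0 (m : nat) := nat -> 'I_(m.-1).+1.
HB.instance Definition _ (m : nat) := gen_eqMixin (Omega0 m).
HB.instance Definition _ (m : nat) := gen_choiceMixin (Omega0 m).
HB.instance Definition _ (m : nat) := isPointed.Build (Omega0 m) (fun _ => ord0).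

(* The metric d_Omega(a,b) = 2^{-k}, k = min{i : a_i <> b_i} (1-based),
   i.e. 2^{-(k0+1)} with k0 the 0-based first index of difference. *)
Definition dOmega (R : realType) (m : nat) (a b : Omega0 m) : R :=
  match pselect (exists i, a i != b i) with
  | left H => (2^-1) ^+ (ex_minn H).+1
  | right _ => 0
  end.

Definition dOpen (R : realType) (m : nat) : set (set (Omega0 m)) :=
  [set A | forall a, A a -> exists2 e : R, 0 < e &
             forall b, @dOmega R m a b < e -> A b].

Definition Omega (R : realType) (m : nat) := g_sigma_algebraType (@dOpen R m).

Definition shift (R : realType) (m : nat) (x : Omega R m) : Omega R m :=
  fun i => x i.+1.

Definition frakT (R : realType) (m : nat) (mu : set (Omega R m) -> \bar R) :
  set (Omega R m) -> \bar R := fun E => mu (@shift R m @^-1` E).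

Definition periodic_point (R : realType) (m : nat)
    (mu : probability (Omega R m) R) : Prop :=
  exists2 r : nat, (1 <= r)%N &
    forall E : set (Omega R m), measurable E ->
      iter r (@frakT R m) (mu : set _ -> _) E = mu E.

Definition lip1 (R : realType) (m : nat) (f : Omega R m -> R) : Prop :=
  forall a b, `|f a - f b| <= @dOmega R m a b.

Definition dMK (R : realType) (m : nat) (mu nu : probability (Omega R m) R)
  : \bar R :=
  ereal_sup [set (\int[mu]_x (f x)%:E - \int[nu]_x (f x)%:E)%E
            | f in [set f | @lip1 R m f]].

(* The periodization x |-> (x_{i mod n})_i lands in the points of period n of
   the shift and moves every point by at most 2^-(n+1), since x and its
   periodization agree on the first n coordinates.  It is 1-Lipschitz, so its
   image measure nu is a periodic point of the push-forward map, and for a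
   1-Lipschitz f, int f dmu - int f dnu = int (f x - f (periodized x)) dmu(x)
   is at most 2^-(n+1), which is below any given eps for n large. *)

From Pilot Require Import Defs.
From HB Require Import structures.
From mathcomp Require Import all_boot all_order all_algebra.
From mathcomp Require Import all_classical all_reals all_analysis.
From mathcomp Require Import measurable_realfun.
Import Order.TTheory GRing.Theory Num.Theory.
Local Open Scope classical_set_scope.
Local Open Scope ring_scope.

Section SequenceSpace.
Variables (R : realType) (m : nat).
Local Notation d := (@dOmega R m).
Local Notation Omega := (Omega R m).
Local Notation shift := (@Defs.shift R m).

Lemma half_ge0 : (0 : R) <= 2^-1. Proof. by rewrite invr_ge0. Qed.

Lemma half_le1 : (2^-1 : R) <= 1. Proof. by rewrite invf_le1 ?ler1n ?ltr0n. Qed.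

Lemma dOmega_le1 a b : d a b <= 1.
Proof.
by rewrite /dOmega; case: pselect => // H; rewrite exprn_ile1 ?half_ge0 ?half_le1.
Qed.

Lemma dOmega_le_agree k a b :
  (forall i, (i < k)%N -> a i = b i) -> d a b <= 2^-1 ^+ k.+1.
Proof.
move=> ab; rewrite /dOmega; case: pselect => [H|_]; last by rewrite exprn_ge0 ?half_ge0.
case: ex_minnP => j abj _; rewrite ler_wiXn2l ?half_ge0 ?half_le1 // ltnS leqNgt.
by apply: contra abj => /ab ->.
Qed.

Lemma dOmega_reindex (phi : nat -> nat) a b :
  (forall i, (phi i <= i)%N) -> d (a \o phi) (b \o phi) <= d a b.
Proof.
move=> phi_le; rewrite /dOmega; case: pselect => [H|_]; last first.
  by case: pselect => // H; rewrite exprn_ge0 ?half_ge0.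
case: ex_minnP => k abk _; case: pselect => [H'|[]]; last by exists (phi k).
case: ex_minnP => j _ j_min; rewrite ler_wiXn2l ?half_ge0 ?half_le1 // ltnS.
exact: leq_trans (j_min _ abk) (phi_le k).
Qed.

Definition nonexpansive (g : Omega -> Omega) := forall a b, d (g a) (g b) <= d a b.

Lemma nonexpansive_measurable g : nonexpansive g -> measurable_fun setT g.
Proof.
move=> g_ne; apply: (@measurability _ _ _ _ setT g (@dOpen R m)) => //.
move=> _ [A A_open <-].
rewrite setTI; apply: sub_sigma_algebra => a /A_open[e e_gt0 Ae].
by exists e => // b ab; apply: Ae; exact: le_lt_trans (g_ne a b) ab.
Qed.

Lemma lip1_comp {f : Omega -> R} {g} : lip1 f -> nonexpansive g -> lip1 (f \o g).
Proof. by move=> f_lip g_ne a b; exact: le_trans (f_lip _ _) (g_ne a b). Qed.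

Lemma lip1_measurable {f : Omega -> R} : lip1 f -> measurable_fun setT f.
Proof.
move=> f_lip; apply: (@measurability _ _ _ _ setT f _ (RGenOInfty.measurableE R)).
move=> _ [_ [x ->] <-]; rewrite setTI; apply: sub_sigma_algebra => a /=.
rewrite in_itv /= andbT => xa; exists (f a - x); first by rewrite subr_gt0.
move=> b /(le_lt_trans (f_lip a b)) /(le_lt_trans (ler_norm _)).
by rewrite /= in_itv /= andbT ltrD2l ltrN2.
Qed.

Lemma lip1_integrable (mu : {finite_measure set Omega -> \bar R}) {f : Omega -> R} :
  lip1 f -> mu.-integrable setT (EFin \o f).
Proof.
move=> f_lip; apply: measurable_bounded_integrable => //.
- exact/fin_num_fun_lty/fin_num_measure.
- exact: lip1_measurable.
pose x0 : Omega := point.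
exists (`|f x0| + 1); split; first by rewrite realE addr_ge0.
move=> M /ltW + x _; apply: le_trans; rewrite /= -[f x](subrK (f x0)).
rewrite (le_trans (ler_normD _ _)) // addrC lerD2l.
exact: le_trans (f_lip x x0) (dOmega_le1 x x0).
Qed.

Lemma dMK_distribution_le (mu : probability Omega R) (g : {mfun Omega >-> Omega})
    (c : R) :
  nonexpansive g -> (forall x, d x (g x) <= c) -> (dMK mu (distribution mu g) <= c%:E)%E.
Proof.
move=> g_ne g_close; apply: ge_ereal_sup => _ [f f_lip <-].
have f_int := lip1_integrable mu f_lip.
have fg_int := lip1_integrable mu (lip1_comp f_lip g_ne).
rewrite integral_distribution //; last exact: measurableT_comp (lip1_measurable f_lip).
rewrite -integralB_EFin //.
rewrite -[leRHS]mule1 -(probability_setT mu) -integral_cst //.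
apply: le_integral => //; first exact: integrableB.
  exact: finite_measure_integrable_cst.
move=> x _; rewrite lee_fin.
exact: le_trans (ler_norm _) (le_trans (f_lip _ _) (g_close x)).
Qed.

Lemma iter_shift k x : iter k shift x = (fun i => x (i + k)%N).
Proof.
elim: k => [|k IH] /=; first by apply: funext => i; rewrite addn0.
by rewrite IH; apply: funext => i; rewrite /Defs.shift addSnnS.
Qed.

Lemma iter_frakT k (mu : set Omega -> \bar R) E :
  iter k (@frakT R m) mu E = mu (iter k shift @^-1` E).
Proof. by elim: k E => [|k IH] E //=; rewrite /frakT IH. Qed.

Lemma distribution_periodic_point (mu : probability Omega R)
    (g : {mfun Omega >-> Omega}) r :
  (0 < r)%N -> (forall x, iter r shift (g x) = g x) ->
  periodic_point (distribution mu g).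
Proof.
move=> r_gt0 g_per; exists r => // E _; rewrite iter_frakT /=.
by congr (mu _); apply: funext => x; rewrite /preimage /= g_per.
Qed.

Definition periodize (n : nat) (x : Omega) : Omega := x \o modn^~ n.

Lemma periodize_nonexpansive n : nonexpansive (periodize n).
Proof. by move=> a b; apply: dOmega_reindex => i; exact: leq_mod. Qed.

Lemma dOmega_periodize n x : d x (periodize n x) <= 2^-1 ^+ n.+1.
Proof. by apply: dOmega_le_agree => i lt_in; rewrite /periodize /= modn_small. Qed.

Lemma iter_shift_periodize n x : iter n shift (periodize n x) = periodize n x.
Proof. by rewrite iter_shift; apply: funext => i; rewrite /periodize /= modnDr. Qed.

End SequenceSpace.

HB.instance Definition _ (R : realType) (m n : nat) :=
  isMeasurableFun.Build _ _ _ _ (@periodize R m n)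
    (@nonexpansive_measurable R m _ (periodize_nonexpansive R m n)).

Theorem lemma2p11 (R : realType) (m : nat) (hm : (0 < m)%N)
    (mu : probability (Omega R m) R) (eps : R) (heps : 0 < eps) :
  exists nu : probability (Omega R m) R,
    periodic_point nu /\ (dMK mu nu < eps%:E)%E.
Proof.
have [N _ small] := near_infty_natSinv_expn_lt (PosNum heps).
pose n := N.+1.
exists (distribution mu (@periodize R m n)); split.
  exact: (distribution_periodic_point R m mu _ n isT (iter_shift_periodize R m n)).
have close := dMK_distribution_le R m mu _ _
  (periodize_nonexpansive R m n) (dOmega_periodize R m n).
apply: le_lt_trans close _.
by rewrite lte_fin exprVn -div1r; apply: small => /=; rewrite ltnW.
Qed.
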